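(* Let $K\in{\rm Alg}(V)$ be a quaternion algebra or an octonion algebra over a field $F$ and let $f,g\in{\rm Gl}(V)$. Then $K^{(f,g)}\cong K^{(af,bg)}$ for all $a,b\in F^\times$.
   Context: $V$ is a finite-dimensional $F$-vector space and ${\rm Alg}(V)$ the set of $F$-bilinear multiplications on $V$. For $f,g\in{\rm End}_F(V)$, $K^{(f,g)}$ is $V$ with product $x\cdot y=f(x)g(y)$ (product of $K$). *)

From HB Require Import structures.
From mathcomp Require Import all_boot all_order all_algebra.
Set Implicit Arguments. Unset Strict Implicit. Unset Printing Implicit Defensive.
Import GRing.Theory.
Local Open Scope ring_scope.

(* V : a finite-dimensional F-vector space (vectType F).
   An element of Alg(V) is an F-bilinear multiplication on V. *)
Definition bilinear_mul (F : fieldType) (V : vectType F) (m : V -> V -> V) :=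
  (forall x, linear (m x)) /\ (forall y, linear (fun x => m x y)).

Definition is_GL (F : fieldType) (V : vectType F) (f : V -> V) :=
  linear f /\ bijective f.

(* K^(f,g) : same space, product x.y = f(x) g(y). *)
Definition twist (F : fieldType) (V : vectType F) (m : V -> V -> V)
  (f g : V -> V) : V -> V -> V := fun x y => m (f x) (g y).

Definition alg_iso (F : fieldType) (V : vectType F) (m1 m2 : V -> V -> V) :=
  exists h : V -> V, [/\ linear h, bijective h &
                         forall x y, h (m1 x y) = m2 (h x) (h y)].

(* Composition algebra (Springer--Veldkamp): a unital algebra carrying a
   quadratic form N with nondegenerate polar form, N(xy) = N(x) N(y). *)
Definition quadratic_form (F : fieldType) (V : vectType F) (N : V -> F) :=
  (forall (a : F) x, N (a *: x) = a ^+ 2 * N x) /\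
  (forall x (a : F) y z,
     N (x + (a *: y + z)) - N x - N (a *: y + z)
     = a * (N (x + y) - N x - N y) + (N (x + z) - N x - N z)).

Definition composition_algebra (F : fieldType) (V : vectType F)
  (m : V -> V -> V) :=
  bilinear_mul m /\
  (exists e : V, forall x, m e x = x /\ m x e = x) /\
  exists N : V -> F,
    [/\ quadratic_form N,
        (forall x, (forall y, N (x + y) - N x - N y = 0) -> x = 0) &
        forall x y, N (m x y) = N x * N y].

Definition quaternion_algebra (F : fieldType) (V : vectType F) (m : V -> V -> V) :=
  composition_algebra m /\ \dim (fullv : {vspace V}) = 4%N.

Definition octonion_algebra (F : fieldType) (V : vectType F) (m : V -> V -> V) :=
  composition_algebra m /\ \dim (fullv : {vspace V}) = 8%N.

From mathcomp Require Import all_boot all_order all_algebra.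
Local Open Scope ring_scope.
Import GRing.Theory.
Set Implicit Arguments. Unset Strict Implicit.

(* Rescaling both factors of K^(f,g) by a and b rescales the product by ab,
   and the homothety x |-> (ab)^-1 x carries any bilinear product onto its
   (ab)-multiple. *)

Section ScaledProducts.

Variables (F : fieldType) (V : vectType F).

Lemma linearZ_fun {h : V -> V} :
  linear h -> forall (c : F) (x : V), h (c *: x) = c *: h x.
Proof. by move=> Lh c x; apply: GRing.scalable_linear. Qed.

Lemma bilinear_mulZ (n : V -> V -> V) (a b : F) (x y : V) :
  bilinear_mul n -> n (a *: x) (b *: y) = (a * b) *: n x y.
Proof.
case=> Ln_r Ln_l.
by rewrite (linearZ_fun (Ln_l _)) (linearZ_fun (Ln_r _)) scalerA.
Qed.

Lemma bilinear_twist (m : V -> V -> V) (f g : V -> V) :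
  bilinear_mul m -> linear f -> linear g -> bilinear_mul (twist m f g).
Proof.
move=> [Lm_r Lm_l] Lf Lg; split=> [x | y] c u v; rewrite /twist.
- by rewrite Lg Lm_r.
- by rewrite Lf Lm_l.
Qed.

Lemma alg_iso_scale (n n' : V -> V -> V) (c : F) :
  bilinear_mul n -> c != 0 -> (forall x y, n' x y = c *: n x y) ->
  alg_iso n n'.
Proof.
move=> Ln c0 def_n'; have cU : c \is a GRing.unit by rewrite unitfE.
exists (fun x => c^-1 *: x); split.
- by move=> k u v; rewrite scalerDr !scalerA mulrC.
- by exists (fun x => c *: x) => x; rewrite scalerA ?mulrV ?mulVr // scale1r.
- move=> x y; rewrite def_n' bilinear_mulZ // scalerA.
  by rewrite mulrA mulrV // mul1r.
Qed.

Lemma twist_scale (m : V -> V -> V) (f g : V -> V) (a b : F) (x y : V) :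
  bilinear_mul m ->
  twist m (fun x => a *: f x) (fun x => b *: g x) x y
    = (a * b) *: twist m f g x y.
Proof. exact: bilinear_mulZ. Qed.

End ScaledProducts.

Lemma composition_algebra_bilinear (F : fieldType) (V : vectType F)
    (m : V -> V -> V) :
  composition_algebra m -> bilinear_mul m.
Proof. by case. Qed.

Theorem corollary1p14 (F : fieldType) (V : vectType F) (m : V -> V -> V)
  (f g : V -> V) (a b : F) :
  quaternion_algebra m \/ octonion_algebra m ->
  is_GL f -> is_GL g ->
  a != 0 -> b != 0 ->
  alg_iso (twist m f g) (twist m (fun x => a *: f x) (fun x => b *: g x)).
Proof.
move=> HK [Lf _] [Lg _] a0 b0.
have Lm : bilinear_mul m.
  by case: HK => -[/composition_algebra_bilinear].
apply: (alg_iso_scale (bilinear_twist Lm Lf Lg) (mulf_neq0 a0 b0)).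
by move=> x y; apply: twist_scale.
Qed.
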